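(* The category $\mathsf{DiGp}$ of digroups does not satisfy the (Huq=Smith) condition: there exist a digroup $X$ and congruences $R,S$ on $X$ such that $[I_R,I_S]=0$ but $[R,S]\neq 0$.
   Context: A digroup is a triple $(G,*,\circ)$ where $(G,* )$, $(G,\circ)$ are groups on the same set $G$ with the same identity $1$; morphisms are maps that are homomorphisms for both operations; products are computed componentwise. A congruence on a digroup $X$ is an equivalence relation $R\subseteq X\times X$ that is a sub-digroup of $X\times X$; $I_R=\{x\in X: x\,R\,1\}$, a sub-digroup of $X$. For sub-digroups $U,V$ of $X$, write $[U,V]=0$ (Huq commutation) if there exists a digroup morphism $\varphi\colon U\times V\to X$ with $\varphi(u,1)=u$ and $\varphi(1,v)=v$ for all $u\in U,v\in V$. For congruences $R,S$ on $X$, let $R\times_X S=\{(x,y,z)\in X^3: x\,R\,y,\ y\,S\,z\}$ (a sub-digroup of $X^3$); write $[R,S]=0$ (Smith commutation) if there exists a digroup morphism $p\colon R\times_X S\to X$ with $p(x,y,y)=x$ whenever $xRy$ and $p(y,y,z)=z$ whenever $ySz$. The category satisfies (Huq=Smith) if for every object $X$ and all congruences $R,S$ on $X$, $[I_R,I_S]=0$ implies $[R,S]=0$. *)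

Record digroup : Type := Digroup {
  dcar :> Type;
  one : dcar;
  mul1 : dcar -> dcar -> dcar;
  inv1 : dcar -> dcar;
  mul2 : dcar -> dcar -> dcar;
  inv2 : dcar -> dcar;
  mul1A : forall x y z, mul1 x (mul1 y z) = mul1 (mul1 x y) z;
  mul1_1l : forall x, mul1 one x = x;
  mul1_1r : forall x, mul1 x one = x;
  mul1_Vl : forall x, mul1 (inv1 x) x = one;
  mul1_Vr : forall x, mul1 x (inv1 x) = one;
  mul2A : forall x y z, mul2 x (mul2 y z) = mul2 (mul2 x y) z;
  mul2_1l : forall x, mul2 one x = x;
  mul2_1r : forall x, mul2 x one = x;
  mul2_Vl : forall x, mul2 (inv2 x) x = one;
  mul2_Vr : forall x, mul2 x (inv2 x) = one
}.

Arguments one {d}.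
Arguments mul1 {d}.
Arguments inv1 {d}.
Arguments mul2 {d}.
Arguments inv2 {d}.

Definition sub_digroup (X : digroup) (U : X -> Prop) : Prop :=
  U one /\
  (forall x y, U x -> U y -> U (mul1 x y)) /\
  (forall x, U x -> U (inv1 x)) /\
  (forall x y, U x -> U y -> U (mul2 x y)) /\
  (forall x, U x -> U (inv2 x)).

Definition congruence (X : digroup) (R : X -> X -> Prop) : Prop :=
  (forall x, R x x) /\
  (forall x y, R x y -> R y x) /\
  (forall x y z, R x y -> R y z -> R x z) /\
  R one one /\
  (forall x y x' y', R x y -> R x' y' -> R (mul1 x x') (mul1 y y')) /\
  (forall x y, R x y -> R (inv1 x) (inv1 y)) /\
  (forall x y x' y', R x y -> R x' y' -> R (mul2 x x') (mul2 y y')) /\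
  (forall x y, R x y -> R (inv2 x) (inv2 y)).

Definition I_of (X : digroup) (R : X -> X -> Prop) : X -> Prop :=
  fun x => R x one.

(** Huq commutation [U,V] = 0: a digroup morphism phi : U x V -> X with
    phi(u,1) = u and phi(1,v) = v.  The morphism is represented by a
    function on X x X whose behaviour only matters on U x V. *)
Definition huq_commute (X : digroup) (U V : X -> Prop) : Prop :=
  exists phi : X -> X -> X,
    (forall u u' v v', U u -> U u' -> V v -> V v' ->
       phi (mul1 u u') (mul1 v v') = mul1 (phi u v) (phi u' v')) /\
    (forall u u' v v', U u -> U u' -> V v -> V v' ->
       phi (mul2 u u') (mul2 v v') = mul2 (phi u v) (phi u' v')) /\
    (forall u, U u -> phi u one = u) /\
    (forall v, V v -> phi one v = v).

Definition in_RXS (X : digroup) (R S : X -> X -> Prop) (x y z : X) : Prop :=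
  R x y /\ S y z.

(** Smith commutation [R,S] = 0: a digroup morphism p : R x_X S -> X with
    p(x,y,y) = x and p(y,y,z) = z.  Again p is a function on X^3 whose
    behaviour only matters on R x_X S. *)
Definition smith_commute (X : digroup) (R S : X -> X -> Prop) : Prop :=
  exists p : X -> X -> X -> X,
    (forall x y z x' y' z', in_RXS X R S x y z -> in_RXS X R S x' y' z' ->
       p (mul1 x x') (mul1 y y') (mul1 z z') = mul1 (p x y z) (p x' y' z')) /\
    (forall x y z x' y' z', in_RXS X R S x y z -> in_RXS X R S x' y' z' ->
       p (mul2 x x') (mul2 y y') (mul2 z z') = mul2 (p x y z) (p x' y' z')) /\
    (forall x y, R x y -> p x y y = x) /\
    (forall y z, S y z -> p y y z = z).

From mathcomp Require Import ssreflect ssrfun ssrbool eqtype ssralg ssrint intdiv.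

(* Transport the addition of an abelian group [V] along a bijection [f]
   fixing [0]: [x o y = f^-1 (f x + f y)].  Both structures induce the same
   congruence "x - y in N" as soon as [f] moves every point inside its
   [N]-coset, and they coincide on [N] when [f] fixes [N] pointwise, so
   [I_R = N] Huq-commutes with itself.  But a digroup Smith commutator must
   be the Mal'tsev term [x y^-1 z] of both group structures at once, and
   for the transposition [f = (1 3)] of [int] with [N = 2Z] these two terms
   disagree on the triple [(3, 5, 7)]. *)

Set Implicit Arguments.
Unset Strict Implicit.
Unset Printing Implicit Defensive.

Import GRing.Theory.
Local Open Scope ring_scope.

Section MalcevOperation.

Variables (T : Type) (e : T) (mul : T -> T -> T) (inv : T -> T).
Hypotheses (mulA : forall x y z, mul x (mul y z) = mul (mul x y) z)
           (mul1x : forall x, mul e x = x) (mulx1 : forall x, mul x e = x)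
           (mulVx : forall x, mul (inv x) x = e)
           (mulxV : forall x, mul x (inv x) = e).
Variables (R S : T -> T -> Prop) (p : T -> T -> T -> T).
Hypotheses (Ree : R e e) (Srefl : forall x, S x x)
           (S_mul : forall x y x' y', S x y -> S x' y' -> S (mul x x') (mul y y')).
Hypotheses (p_mul : forall x y z x' y' z', R x y /\ S y z -> R x' y' /\ S y' z' ->
                      p (mul x x') (mul y y') (mul z z') = mul (p x y z) (p x' y' z'))
           (pxyy : forall x y, R x y -> p x y y = x)
           (pyyz : forall y z, S y z -> p y y z = z).

Lemma malcev_operationE x y z :
  R x y -> S y z -> p x y z = mul x (mul (inv y) z).
Proof.
move=> Rxy Syz.
have S1 : S e (mul (inv y) z) by rewrite -(mulVx y); apply: S_mul.
have -> : p x y z = p (mul x e) (mul y e) (mul y (mul (inv y) z)).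
  by rewrite !mulx1 mulA mulxV mul1x.
by rewrite p_mul ?pxyy ?pyyz.
Qed.

End MalcevOperation.

Lemma smith_commute_malcev (X : digroup) (R S : X -> X -> Prop) :
  congruence X R -> congruence X S -> smith_commute X R S ->
  forall x y z, R x y -> S y z ->
  mul1 x (mul1 (inv1 y) z) = mul2 x (mul2 (inv2 y) z).
Proof.
move=> [_ [_ [_ [R11 _]]]] [Srefl [_ [_ [_ [S_mul1 [_ [S_mul2 _]]]]]]].
move=> [p [p_mul1 [p_mul2 [pxyy pyyz]]]] x y z Rxy Syz.
rewrite -(malcev_operationE (mul1A X) (mul1_1l X) (mul1_1r X) (mul1_Vl X) (mul1_Vr X)
            R11 Srefl S_mul1 p_mul1 pxyy pyyz Rxy Syz).
exact: (malcev_operationE (mul2A X) (mul2_1l X) (mul2_1r X) (mul2_Vl X) (mul2_Vr X)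
          R11 Srefl S_mul2 p_mul2 pxyy pyyz Rxy Syz).
Qed.

Section TwistedDigroup.

Variables (V : zmodType) (f g : V -> V).
Hypotheses (fK : cancel f g) (gK : cancel g f) (f0 : f 0 = 0).

Definition twist_mul x y := g (f x + f y).
Definition twist_opp x := g (- f x).

Let g0 : g 0 = 0. Proof. by rewrite -f0 fK. Qed.

Lemma twist_mulA x y z :
  twist_mul x (twist_mul y z) = twist_mul (twist_mul x y) z.
Proof. by rewrite /twist_mul !gK addrA. Qed.

Lemma twist_mul0x x : twist_mul 0 x = x.
Proof. by rewrite /twist_mul f0 add0r fK. Qed.

Lemma twist_mulx0 x : twist_mul x 0 = x.
Proof. by rewrite /twist_mul f0 addr0 fK. Qed.

Lemma twist_mulNx x : twist_mul (twist_opp x) x = 0.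
Proof. by rewrite /twist_mul /twist_opp gK addNr g0. Qed.

Lemma twist_mulxN x : twist_mul x (twist_opp x) = 0.
Proof. by rewrite /twist_mul /twist_opp gK addrN g0. Qed.

Definition twist_digroup : digroup :=
  @Digroup V 0 +%R -%R twist_mul twist_opp (@addrA V) (@add0r V) (@addr0 V) (@addNr V) (@addrN V)
    twist_mulA twist_mul0x twist_mulx0 twist_mulNx twist_mulxN.

Lemma twist_malcevE x y z :
  twist_mul x (twist_mul (twist_opp y) z) = g (f x - f y + f z).
Proof. by rewrite /twist_mul /twist_opp !gK addrA. Qed.

Variable N : zmodClosed V.
Hypothesis f_coset : forall x, f x - x \in N.

Definition coset_rel (x y : V) : Prop := x - y \in N.

Lemma coset_rel_f x y : (f x - f y \in N) = (x - y \in N).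
Proof.
have -> : f x - f y = (f x - x) + (x - y) - (f y - y).
  by rewrite opprB !addrA !subrK.
by rewrite (rpredBr _ (f_coset y)) (rpredDl _ (f_coset x)).
Qed.

Lemma coset_rel_g x y : (g x - g y \in N) = (x - y \in N).
Proof. by rewrite -coset_rel_f !gK. Qed.

Lemma twist_coset_congruence : congruence twist_digroup coset_rel.
Proof.
rewrite /coset_rel /=.
have addD (x y x' y' : V) : x + x' - (y + y') = (x - y) + (x' - y').
  by rewrite opprD addrACA.
do !split=> /=.
- by move=> x; rewrite subrr rpred0.
- by move=> x y; rewrite -opprB rpredN.
- by move=> x y z Nxy Nyz; rewrite -[x](subrK y) -addrA rpredD.
- by rewrite subrr rpred0.
- by move=> x y x' y' Nxy Nxy'; rewrite addD rpredD.
- by move=> x y Nxy; rewrite -opprD rpredN.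
- by move=> x y x' y' Nxy Nxy'; rewrite coset_rel_g addD rpredD ?coset_rel_f.
- by move=> x y Nxy; rewrite coset_rel_g -opprD rpredN coset_rel_f.
Qed.

Hypothesis f_fixN : {in N, f =1 id}.

Lemma twist_mul_fixN u v : u \in N -> v \in N -> twist_mul u v = u + v.
Proof.
move=> Nu Nv; have Nuv := rpredD Nu Nv.
by rewrite /twist_mul !f_fixN //; apply: (canLR fK); rewrite f_fixN.
Qed.

Lemma twist_coset_huq :
  huq_commute twist_digroup (I_of twist_digroup coset_rel) (I_of twist_digroup coset_rel).
Proof.
rewrite /I_of /coset_rel /=.
exists +%R; do !split => /=.
- by move=> u u' v v' _ _ _ _; rewrite addrACA.
- move=> u u' v v'; rewrite !subr0 => Nu Nu' Nv Nv'.
  by rewrite !twist_mul_fixN ?rpredD // addrACA.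
- by move=> u _; rewrite addr0.
- by move=> v _; rewrite add0r.
Qed.

End TwistedDigroup.

Definition swap13 (x : int) : int :=
  if x == 1 then 3 else if x == 3 then 1 else x.

Lemma swap13K : involutive swap13.
Proof.
by move=> x; rewrite /swap13; have [->|x1] := eqVneq x 1 => //; have [->|x3] := eqVneq x 3 => //; rewrite (negbTE x1) (negbTE x3).
Qed.

Lemma swap13_coset x : (2 %| swap13 x - x)%Z.
Proof.
by rewrite /swap13; have [->|x1] := eqVneq x 1 => //; have [->|x3] := eqVneq x 3; rewrite ?subrr.
Qed.

Lemma swap13_fix_even : {in dvdz 2, swap13 =1 id}.
Proof. by move=> x x_even; rewrite /swap13; case: eqP x_even => [->|_] //; case: eqP => [->|]. Qed.

Theorem proposition3p6 :
  exists (X : digroup) (R S : X -> X -> Prop),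
    congruence X R /\ congruence X S /\
    huq_commute X (I_of X R) (I_of X S) /\
    ~ smith_commute X R S.
Proof.
have congR := twist_coset_congruence swap13K swap13K (erefl : swap13 0 = 0) swap13_coset.
exists (twist_digroup swap13K swap13K (erefl : swap13 0 = 0)).
exists (coset_rel (dvdz 2 : {pred int})), (coset_rel (dvdz 2 : {pred int})).
do !split => //; first exact: twist_coset_huq swap13_fix_even.
move=> /(smith_commute_malcev congR congR) /(_ 3 5 7 isT isT) /eqP.
by rewrite /= (twist_malcevE swap13K).
Qed.
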